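(* Assume (A1) and fix all parameters except $\omega$. (i) As a function of $\omega\in[0,1]$, $P^*(\omega)$ is either strictly increasing on $[0,1]$, or strictly decreasing on $[0,1]$, or there exists $\omega_{P^*}\in(0,1)$ such that $P^*$ is strictly decreasing on $[0,\omega_{P^*})$ and strictly increasing on $(\omega_{P^*},1]$. As a function of $\omega\in[0,1]$, $Y^*(\omega)$ is either strictly increasing on $[0,1]$, or there exists $\omega_{Y^*}\in(0,1)$ such that $Y^*$ is strictly increasing on $[0,\omega_{Y^*})$ and strictly decreasing on $(\omega_{Y^*},1]$. (ii) Assume moreover $1/\sqrt{2\beta}<b<\min\{dA/(1-c),F^*\}$ and $$P^L(\omega)\ne P^*(\omega)-\frac{1-c}{1-c-\omega^2dh}\sqrt{b^2-\frac{1}{2\beta}}\quad\text{for all }\omega\in(0,1).$$ Then for each $j\in\{L,H\}$: on $(0,1)$, $P^j$ is either strictly increasing, or strictly decreasing, or there exists $\omega_{P^j}\in(0,1)$ such that $P^j$ is strictly decreasing on $(0,\omega_{P^j})$ and strictly increasing on $(\omega_{P^j},1)$; and $Y^j$ is either strictly increasing on $(0,1)$, or there exists $\omega_{Y^j}\in(0,1)$ such that $Y^j$ is strictly increasing on $(0,\omega_{Y^j})$ and strictly decreasing on $(\omega_{Y^j},1)$.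
   Context: Let $g_I,g_P:\mathbb{R}\to\mathbb{R}$ be continuously differentiable functions, each satisfying: $g(0)=0$ and $g$ strictly increasing; $g$ convex on $(-\infty,0]$ and concave on $[0,+\infty)$, with maximal slope attained at $0$ and $g'(0)=1$; $g$ bounded above and below. Parameters: $A>0$, $c\in(0,1)$, $\gamma>0$, $\omega\in[0,1]$, $h>0$, $d>0$, $\sigma>0$, $\mu>0$, $F^*>0$, $b>0$, $\beta>0$. Let $G=(G_1,G_2,G_3):\mathbb{R}^3\to\mathbb{R}^3$ be defined by $G_1(Y,P,Z)=A+cY+\gamma g_I(Y-Z)+\omega hP$, $G_2(Y,P,Z)=P+\sigma g_P\big(\mu\big((1-\omega)F^*+\omega dY-P+b(2\alpha(Y,P)-1)\big)\big)$, $G_3(Y,P,Z)=Y$, where $\alpha(Y,P)=\dfrac{1}{1+e^{-4b\beta(P-(1-\omega)F^*-\omega dY)}}$. A steady state is a fixed point of $G$. Assumption (A1): $1-c-hd>0$. The steady state $S^*=(Y^*,P^*,Y^* )$ has $Y^*(\omega)=\frac{A+\omega(1-\omega)hF^*}{1-c-\omega^2dh}$, $P^*(\omega)=\frac{(1-\omega)(1-c)F^*+\omega dA}{1-c-\omega^2dh}$. When $b>1/\sqrt{2\beta}$, $G$ has exactly three steady states for each $\omega$, and $S^L(\omega)=(Y^L,P^L,Y^L)$, $S^H(\omega)=(Y^H,P^H,Y^H)$ denote the two with $P^L<P^*<P^H$. *)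

From Stdlib Require Import Reals Lra.
Open Scope R_scope.

Definition strict_incr_on (D : R -> Prop) (f : R -> R) : Prop :=
  forall x y, D x -> D y -> x < y -> f x < f y.
Definition strict_decr_on (D : R -> Prop) (f : R -> R) : Prop :=
  forall x y, D x -> D y -> x < y -> f y < f x.

Definition convex_on (D : R -> Prop) (g : R -> R) : Prop :=
  forall x y t, D x -> D y -> 0 <= t <= 1 ->
    g (t * x + (1 - t) * y) <= t * g x + (1 - t) * g y.
Definition concave_on (D : R -> Prop) (g : R -> R) : Prop :=
  forall x y t, D x -> D y -> 0 <= t <= 1 ->
    t * g x + (1 - t) * g y <= g (t * x + (1 - t) * y).

Definition admissible_g (g : R -> R) : Prop :=
  exists g' : R -> R,
    (forall x, derivable_pt_lim g x (g' x)) /\ continuity g' /\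
    g 0 = 0 /\
    strict_incr_on (fun _ => True) g /\
    convex_on (fun x => x <= 0) g /\
    concave_on (fun x => 0 <= x) g /\
    (forall x, g' x <= g' 0) /\ g' 0 = 1 /\
    (exists m M, forall x, m <= g x <= M).

Definition alpha (b beta omega d Fstar Y P : R) : R :=
  1 / (1 + exp (- (4 * b * beta * (P - (1 - omega) * Fstar - omega * d * Y)))).

Definition Gmap (gI gP : R -> R)
    (A c gamma omega h d sigma mu Fstar b beta : R) (X : R * R * R) : R * R * R :=
  let '(Y, P, Z) := X in
  (A + c * Y + gamma * gI (Y - Z) + omega * h * P,
   P + sigma * gP (mu * ((1 - omega) * Fstar + omega * d * Y - P
                         + b * (2 * alpha b beta omega d Fstar Y P - 1))),
   Y).

Definition steady_state (gI gP : R -> R)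
    (A c gamma omega h d sigma mu Fstar b beta : R) (X : R * R * R) : Prop :=
  Gmap gI gP A c gamma omega h d sigma mu Fstar b beta X = X.

Definition Ystar (A c h d Fstar omega : R) : R :=
  (A + omega * (1 - omega) * h * Fstar) / (1 - c - omega ^ 2 * d * h).
Definition Pstar (A c h d Fstar omega : R) : R :=
  ((1 - omega) * (1 - c) * Fstar + omega * d * A) / (1 - c - omega ^ 2 * d * h).

Definition closed01 (w : R) : Prop := 0 <= w <= 1.
Definition open01 (w : R) : Prop := 0 < w < 1.

Definition P_shape (D : R -> Prop) (f : R -> R) : Prop :=
  strict_incr_on D f \/ strict_decr_on D f \/
  exists w0, 0 < w0 < 1 /\
    strict_decr_on (fun w => D w /\ w < w0) f /\
    strict_incr_on (fun w => D w /\ w0 < w) f.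

Definition Y_shape (D : R -> Prop) (f : R -> R) : Prop :=
  strict_incr_on D f \/
  exists w0, 0 < w0 < 1 /\
    strict_incr_on (fun w => D w /\ w < w0) f /\
    strict_decr_on (fun w => D w /\ w0 < w) f.

(* At a steady state (Y, P, Y) the goods market gives (1 - c) Y = A + w h P, and the
   price offset x = P - (1 - w) F* - w d Y is a fixed point of x |-> b tanh (2 b beta x).
   Nonzero fixed points of the same sign coincide, so the offset is constant along the
   L- and H-branches, as it is (equal to zero) at S*.  Hence P and Y are quotients of a
   quadratic in w by 1 - c - d h w^2.  For such a quotient f, f y - f x has the sign of
   (y - x) K x y with K symmetric bilinear.  For P the kernel is increasing in both
   arguments, so its sign on the diagonal changes at most once, from - to +; for Y the
   signs of K at the corners of [0, z]^2 and [z, 1]^2, z a diagonal root, give the shape. *)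

From Stdlib Require Import Reals Lra.
From Coquelicot Require Import Coquelicot.
Open Scope R_scope.

Definition bilin (m0 m1 m2 x y : R) : R := m0 + m1 * (x + y) + m2 * (x * y).

Lemma bilin_opp m0 m1 m2 x y : bilin (- m0) (- m1) (- m2) x y = - bilin m0 m1 m2 x y.
Proof. unfold bilin; ring. Qed.

Lemma bilin_lt_mono m0 m1 m2 r s p q :
  0 < m1 -> 0 < m1 + m2 -> 0 <= r <= p -> p <= 1 -> 0 <= s <= q -> q <= 1 ->
  r < p \/ s < q -> bilin m0 m1 m2 r s < bilin m0 m1 m2 p q.
Proof.
  intros hm1 hm12 Hrp Hp Hsq Hq Hlt.
  assert (slope_pos : forall t, 0 <= t <= 1 -> 0 < m1 + m2 * t).
  { intros t Ht. replace (m1 + m2 * t) with ((1 - t) * m1 + t * (m1 + m2)) by ring.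
    destruct (Req_dec t 0) as [->|]; nra. }
  pose proof (slope_pos q ltac:(lra)). pose proof (slope_pos r ltac:(lra)).
  replace (bilin m0 m1 m2 p q) with
    (bilin m0 m1 m2 r s + (p - r) * (m1 + m2 * q) + (q - s) * (m1 + m2 * r))
    by (unfold bilin; ring).
  destruct Hlt; nra.
Qed.

(* Bilinear interpolation from the corners of [p, q]^2; off the diagonal the
   weight of the corner (p, q) is positive. *)
Lemma bilin_pos_on_square m0 m1 m2 p q x y :
  0 <= bilin m0 m1 m2 p p -> 0 < bilin m0 m1 m2 p q -> 0 <= bilin m0 m1 m2 q q ->
  p <= x -> x < y -> y <= q -> 0 < bilin m0 m1 m2 x y.
Proof.
  intros Hpp Hpq Hqq Hpx Hxy Hyq.
  assert (E : (q - p) ^ 2 * bilin m0 m1 m2 x y =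
    (q - x) * (q - y) * bilin m0 m1 m2 p p + (x - p) * (q - y) * bilin m0 m1 m2 p q
    + (q - x) * (y - p) * bilin m0 m1 m2 p q + (x - p) * (y - p) * bilin m0 m1 m2 q q)
    by (unfold bilin; ring).
  assert (0 <= (q - x) * (q - y) * bilin m0 m1 m2 p p) by (apply Rmult_le_pos; nra).
  assert (0 <= (x - p) * (q - y) * bilin m0 m1 m2 p q) by (apply Rmult_le_pos; nra).
  assert (0 < (q - x) * (y - p) * bilin m0 m1 m2 p q) by (apply Rmult_lt_0_compat; nra).
  assert (0 <= (x - p) * (y - p) * bilin m0 m1 m2 q q) by (apply Rmult_le_pos; nra).
  apply (Rmult_lt_reg_l ((q - p) ^ 2)); [nra | lra].
Qed.

Lemma bilin_neg_on_square m0 m1 m2 p q x y :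
  bilin m0 m1 m2 p p <= 0 -> bilin m0 m1 m2 p q < 0 -> bilin m0 m1 m2 q q <= 0 ->
  p <= x -> x < y -> y <= q -> bilin m0 m1 m2 x y < 0.
Proof.
  intros. enough (0 < bilin (- m0) (- m1) (- m2) x y) by (rewrite bilin_opp in *; lra).
  apply (bilin_pos_on_square _ _ _ p q); rewrite ?bilin_opp; lra.
Qed.

Lemma bilin_diag_root m0 m1 m2 :
  bilin m0 m1 m2 0 0 * bilin m0 m1 m2 1 1 < 0 ->
  exists z, 0 < z < 1 /\ bilin m0 m1 m2 z z = 0.
Proof.
  intros Hsign.
  destruct (IVT_cor (fun w => bilin m0 m1 m2 w w) 0 1) as [z [Hz Hroot]];
    [unfold bilin; reg | lra | lra |].
  exists z. split; [|exact Hroot].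
  split; apply Rnot_le_lt; intros Hle.
  - replace z with 0 in Hroot by lra. nra.
  - replace z with 1 in Hroot by lra. nra.
Qed.

Section ShapeFromKernel.
Variables (D : R -> Prop) (f : R -> R) (m0 m1 m2 : R).
Hypothesis D_sub : forall w, D w -> 0 <= w <= 1.
Hypothesis f_up : forall x y, D x -> D y -> x < y -> 0 < bilin m0 m1 m2 x y -> f x < f y.
Hypothesis f_down : forall x y, D x -> D y -> x < y -> bilin m0 m1 m2 x y < 0 -> f y < f x.

Lemma P_shape_of_kernel : 0 < m1 -> 0 < m1 + m2 -> P_shape D f.
Proof.
  intros hm1 hm12.
  destruct (Rle_lt_dec 0 (bilin m0 m1 m2 0 0)) as [H00|H00].
  { left. intros x y Hx Hy Hxy. apply f_up; auto.
    pose proof (D_sub x Hx). pose proof (D_sub y Hy).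
    pose proof (bilin_lt_mono m0 m1 m2 0 0 x y); lra. }
  destruct (Rle_lt_dec (bilin m0 m1 m2 1 1) 0) as [H11|H11].
  { right; left. intros x y Hx Hy Hxy. apply f_down; auto.
    pose proof (D_sub x Hx). pose proof (D_sub y Hy).
    pose proof (bilin_lt_mono m0 m1 m2 x y 1 1); lra. }
  destruct (bilin_diag_root m0 m1 m2) as [z [Hz Hzz]]; [nra|].
  right; right. exists z. split; [exact Hz | split].
  - intros x y [Hx Hxz] [Hy Hyz] Hxy. apply f_down; auto.
    pose proof (D_sub x Hx). pose proof (D_sub y Hy).
    pose proof (bilin_lt_mono m0 m1 m2 x y z z); lra.
  - intros x y [Hx Hxz] [Hy Hyz] Hxy. apply f_up; auto.
    pose proof (D_sub x Hx). pose proof (D_sub y Hy).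
    pose proof (bilin_lt_mono m0 m1 m2 z z x y); lra.
Qed.

Lemma Y_shape_of_kernel : 0 < m0 -> m2 < m0 -> 0 < m0 + m1 -> Y_shape D f.
Proof.
  intros hm0 hm20 hm01.
  assert (H00 : bilin m0 m1 m2 0 0 = m0) by (unfold bilin; ring).
  assert (H01 : bilin m0 m1 m2 0 1 = m0 + m1) by (unfold bilin; ring).
  destruct (Rle_lt_dec 0 (bilin m0 m1 m2 1 1)) as [H11|H11].
  { left. intros x y Hx Hy Hxy. apply f_up; auto.
    pose proof (D_sub x Hx). pose proof (D_sub y Hy).
    apply (bilin_pos_on_square m0 m1 m2 0 1); lra. }
  destruct (bilin_diag_root m0 m1 m2) as [z [Hz Hzz]]; [nra|].
  (* At a diagonal root z, [m0 - m2 z^2 > 0] fixes the signs at the corners (0, z), (z, 1). *)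
  assert (Hgap : 0 < m0 - m2 * z ^ 2).
  { replace (m0 - m2 * z ^ 2) with ((1 - z ^ 2) * m0 + z ^ 2 * (m0 - m2)) by ring.
    assert (0 < 1 - z ^ 2) by nra. assert (0 < z ^ 2) by nra. nra. }
  assert (H0z : 2 * bilin m0 m1 m2 0 z = m0 - m2 * z ^ 2 + bilin m0 m1 m2 z z)
    by (unfold bilin; ring).
  assert (Hz1 : 2 * z * bilin m0 m1 m2 z 1 =
    (z + 1) * bilin m0 m1 m2 z z - (1 - z) * (m0 - m2 * z ^ 2)) by (unfold bilin; ring).
  assert (0 < (1 - z) * (m0 - m2 * z ^ 2)) by (apply Rmult_lt_0_compat; lra).
  right. exists z. split; [exact Hz | split].
  - intros x y [Hx Hxz] [Hy Hyz] Hxy. apply f_up; auto.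
    pose proof (D_sub x Hx).
    apply (bilin_pos_on_square m0 m1 m2 0 z); lra.
  - intros x y [Hx Hxz] [Hy Hyz] Hxy. apply f_down; auto.
    pose proof (D_sub y Hy).
    apply (bilin_neg_on_square m0 m1 m2 z 1); nra.
Qed.

End ShapeFromKernel.

Definition quad_ratio (p0 p1 p2 q0 q2 w : R) : R :=
  (p0 + p1 * w + p2 * w ^ 2) / (q0 - q2 * w ^ 2).

Section QuadRatio.
Variables p0 p1 p2 q0 q2 : R.
Hypotheses (q0_pos : 0 < q0) (q2_lt_q0 : q2 < q0).

Lemma quad_ratio_denom_pos w : 0 <= w <= 1 -> 0 < q0 - q2 * w ^ 2.
Proof.
  intros Hw. assert (0 <= w ^ 2 <= 1) by (simpl; nra).
  destruct (Rle_lt_dec q2 0); nra.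
Qed.

Lemma quad_ratio_sub x y : 0 <= x <= 1 -> 0 <= y <= 1 ->
  quad_ratio p0 p1 p2 q0 q2 y - quad_ratio p0 p1 p2 q0 q2 x =
  (y - x) * bilin (p1 * q0) (p0 * q2 + p2 * q0) (p1 * q2) x y
    / ((q0 - q2 * x ^ 2) * (q0 - q2 * y ^ 2)).
Proof.
  intros Hx Hy. pose proof (quad_ratio_denom_pos x Hx). pose proof (quad_ratio_denom_pos y Hy).
  unfold quad_ratio, bilin. field. lra.
Qed.

Section OnDomain.
Variables (D : R -> Prop) (f : R -> R).
Hypothesis D_sub : forall w, D w -> 0 <= w <= 1.
Hypothesis f_eq : forall w, D w -> f w = quad_ratio p0 p1 p2 q0 q2 w.

Lemma quad_ratio_up x y : D x -> D y -> x < y ->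
  0 < bilin (p1 * q0) (p0 * q2 + p2 * q0) (p1 * q2) x y -> f x < f y.
Proof.
  intros Hx Hy Hxy HK. rewrite !f_eq by assumption.
  pose proof (D_sub x Hx). pose proof (D_sub y Hy).
  pose proof (quad_ratio_denom_pos x ltac:(auto)). pose proof (quad_ratio_denom_pos y ltac:(auto)).
  enough (0 < quad_ratio p0 p1 p2 q0 q2 y - quad_ratio p0 p1 p2 q0 q2 x) by lra.
  rewrite quad_ratio_sub by assumption. apply Rdiv_lt_0_compat; nra.
Qed.

Lemma quad_ratio_down x y : D x -> D y -> x < y ->
  bilin (p1 * q0) (p0 * q2 + p2 * q0) (p1 * q2) x y < 0 -> f y < f x.
Proof.
  intros Hx Hy Hxy HK. rewrite !f_eq by assumption.
  pose proof (D_sub x Hx). pose proof (D_sub y Hy).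
  pose proof (quad_ratio_denom_pos x ltac:(auto)). pose proof (quad_ratio_denom_pos y ltac:(auto)).
  enough (0 < quad_ratio p0 p1 p2 q0 q2 x - quad_ratio p0 p1 p2 q0 q2 y) by lra.
  replace (quad_ratio p0 p1 p2 q0 q2 x - quad_ratio p0 p1 p2 q0 q2 y)
    with (- (quad_ratio p0 p1 p2 q0 q2 y - quad_ratio p0 p1 p2 q0 q2 x)) by ring.
  rewrite quad_ratio_sub by assumption.
  assert ((y - x) * bilin (p1 * q0) (p0 * q2 + p2 * q0) (p1 * q2) x y < 0) by nra.
  assert (0 < / ((q0 - q2 * x ^ 2) * (q0 - q2 * y ^ 2))) by (apply Rinv_0_lt_compat; nra).
  unfold Rdiv. nra.
Qed.

Lemma P_shape_quad_ratio :
  0 < p0 * q2 + p2 * q0 -> 0 < p0 * q2 + p2 * q0 + p1 * q2 -> P_shape D f.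
Proof.
  intros. eapply P_shape_of_kernel; eauto using quad_ratio_up, quad_ratio_down.
Qed.

Lemma Y_shape_quad_ratio : 0 < p1 -> 0 < p1 * q0 + p0 * q2 + p2 * q0 -> Y_shape D f.
Proof.
  intros. eapply Y_shape_of_kernel; eauto using quad_ratio_up, quad_ratio_down; nra.
Qed.

End OnDomain.
End QuadRatio.

(* [b (2 alpha - 1)] as a function of the offset; it equals [b tanh (k x / 2)]. *)
Definition scaled_logistic (b k x : R) : R := b * (2 * (1 / (1 + exp (- (k * x)))) - 1).

Lemma scaled_logistic_0 b k : scaled_logistic b k 0 = 0.
Proof. unfold scaled_logistic. rewrite Rmult_0_r, Ropp_0, exp_0. field. Qed.

Lemma scaled_logistic_opp b k x : scaled_logistic b k (- x) = - scaled_logistic b k x.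
Proof.
  unfold scaled_logistic. replace (- (k * - x)) with (k * x) by ring.
  rewrite exp_Ropp. pose proof (exp_pos (k * x)). field. lra.
Qed.

Lemma scaled_logistic_bound b k x : 0 < b -> - b < scaled_logistic b k x < b.
Proof.
  intros hb. unfold scaled_logistic. pose proof (exp_pos (- (k * x))).
  assert (0 < 1 / (1 + exp (- (k * x))) < 1).
  { split; [apply Rdiv_lt_0_compat; lra |].
    apply (Rmult_lt_reg_r (1 + exp (- (k * x)))); [lra |]. field_simplify; lra. }
  nra.
Qed.

Lemma scaled_logistic_sub_id_derive b k x :
  derivable_pt_lim (fun x => scaled_logistic b k x - x) x
    (2 * b * k * exp (- (k * x)) / (1 + exp (- (k * x))) ^ 2 - 1).
Proof.
  apply is_derive_Reals. unfold scaled_logistic. pose proof (exp_pos (- (k * x))).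
  auto_derive; [lra | field; lra].
Qed.

(* With [z = exp (-k x)], a critical point of [scaled_logistic b k x - x] solves
   [2 b k z = (1 + z)^2]; two such [z] in (0, 1) would have product 1. *)
Lemma scaled_logistic_one_critical_point b k c1 c2 : 0 < k -> 0 < c1 < c2 ->
  2 * b * k * exp (- (k * c1)) / (1 + exp (- (k * c1))) ^ 2 = 1 ->
  2 * b * k * exp (- (k * c2)) / (1 + exp (- (k * c2))) ^ 2 = 1 -> False.
Proof.
  intros hk Hc E1 E2.
  set (z1 := exp (- (k * c1))) in *. set (z2 := exp (- (k * c2))) in *.
  assert (z2 < z1) by (apply exp_increasing; nra).
  assert (z1 < 1) by (rewrite <- exp_0; apply exp_increasing; nra).
  assert (0 < z2) by apply exp_pos.
  assert (Q1 : 2 * b * k * z1 = (1 + z1) ^ 2)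
    by (apply (Rmult_eq_reg_r (/ (1 + z1) ^ 2)); [rewrite Rinv_r; [exact E1 | nra] |
        apply Rinv_neq_0_compat; nra]).
  assert (Q2 : 2 * b * k * z2 = (1 + z2) ^ 2)
    by (apply (Rmult_eq_reg_r (/ (1 + z2) ^ 2)); [rewrite Rinv_r; [exact E2 | nra] |
        apply Rinv_neq_0_compat; nra]).
  assert (2 * b * k = 2 + z1 + z2) by (apply (Rmult_eq_reg_r (z1 - z2)); nra).
  nra.
Qed.

(* Rolle twice on [scaled_logistic b k x - x], which vanishes at 0, x1 and x2, yields
   two critical points. *)
Lemma scaled_logistic_pos_fixed_unique b k x1 x2 : 0 < k -> 0 < x1 -> x1 < x2 ->
  scaled_logistic b k x1 = x1 -> scaled_logistic b k x2 = x2 -> False.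
Proof.
  intros hk Hx1 Hx12 E1 E2.
  destruct (MVT_cor2 (fun x => scaled_logistic b k x - x)
    (fun x => 2 * b * k * exp (- (k * x)) / (1 + exp (- (k * x))) ^ 2 - 1) 0 x1 Hx1)
    as [c1 [D1 Hc1]]; [intros; apply scaled_logistic_sub_id_derive |].
  destruct (MVT_cor2 (fun x => scaled_logistic b k x - x)
    (fun x => 2 * b * k * exp (- (k * x)) / (1 + exp (- (k * x))) ^ 2 - 1) x1 x2 Hx12)
    as [c2 [D2 Hc2]]; [intros; apply scaled_logistic_sub_id_derive |].
  cbv beta in D1, D2. rewrite scaled_logistic_0, E1, E2 in *.
  apply (scaled_logistic_one_critical_point b k c1 c2); [exact hk | lra | nra | nra].
Qed.

Lemma scaled_logistic_fixed_same_sign b k x1 x2 : 0 < k -> 0 < x1 * x2 ->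
  scaled_logistic b k x1 = x1 -> scaled_logistic b k x2 = x2 -> x1 = x2.
Proof.
  intros hk.
  assert (pos : forall y1 y2, 0 < y1 -> 0 < y2 ->
    scaled_logistic b k y1 = y1 -> scaled_logistic b k y2 = y2 -> y1 = y2).
  { intros y1 y2 H1 H2 E1 E2.
    destruct (Rtotal_order y1 y2) as [H|[H|H]]; [exfalso | exact H | exfalso].
    - exact (scaled_logistic_pos_fixed_unique b k y1 y2 hk H1 H E1 E2).
    - exact (scaled_logistic_pos_fixed_unique b k y2 y1 hk H2 H E2 E1). }
  intros Hsign E1 E2. destruct (Rlt_dec 0 x1).
  - apply pos; nra.
  - enough (- x1 = - x2) by lra.
    assert (x1 < 0) by (destruct (Req_dec x1 0) as [->|]; [lra | nra]).
    apply pos; [lra | nra | rewrite scaled_logistic_opp; lra | rewrite scaled_logistic_opp; lra].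
Qed.

Lemma admissible_g_0 g : admissible_g g -> g 0 = 0.
Proof. intros [g' [_ [_ [g0 _]]]]. exact g0. Qed.

Lemma admissible_g_root g x : admissible_g g -> g x = 0 -> x = 0.
Proof.
  intros [g' [_ [_ [g0 [g_incr _]]]]] Hx.
  destruct (Rtotal_order x 0) as [H|[H|H]]; [exfalso | exact H | exfalso].
  - pose proof (g_incr x 0 I I H). lra.
  - pose proof (g_incr 0 x I I H). lra.
Qed.

Lemma steady_state_equations gI gP A c gamma w h d sigma mu F b beta Y P :
  admissible_g gI -> admissible_g gP -> 0 < sigma -> 0 < mu ->
  steady_state gI gP A c gamma w h d sigma mu F b beta (Y, P, Y) ->
  (1 - c) * Y = A + w * h * P /\
  scaled_logistic b (4 * b * beta) (P - (1 - w) * F - w * d * Y)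
    = P - (1 - w) * F - w * d * Y.
Proof.
  intros HI HP hsigma hmu Hss. unfold steady_state, Gmap in Hss.
  injection Hss as E1 E2.
  rewrite Rminus_diag, (admissible_g_0 gI HI) in E1.
  split; [lra |].
  assert (E : sigma * gP (mu * ((1 - w) * F + w * d * Y - P
    + b * (2 * alpha b beta w d F Y P - 1))) = 0) by lra.
  apply Rmult_integral in E as [E|E]; [lra |].
  apply (admissible_g_root gP) in E; [| exact HP].
  apply Rmult_integral in E as [E|E]; [lra |].
  unfold alpha in E. unfold scaled_logistic. lra.
Qed.

Definition branch_P (A c h d F k w : R) : R :=
  quad_ratio ((1 - c) * (F - k)) (d * A - (1 - c) * F) 0 (1 - c) (d * h) w.
Definition branch_Y (A c h d F k w : R) : R :=
  quad_ratio A (h * (F - k)) (- (h * F)) (1 - c) (d * h) w.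

Section Branches.
Variables A c h d F : R.
Hypotheses (hc : 0 < c < 1) (hh : 0 < h) (hd : 0 < d) (A1 : 1 - c - h * d > 0).

Lemma branch_shapes k (D : R -> Prop) (Pf Yf : R -> R) :
  k < F -> (1 - c) * k < d * A -> (forall w, D w -> 0 <= w <= 1) ->
  (forall w, D w -> Pf w = branch_P A c h d F k w) ->
  (forall w, D w -> Yf w = branch_Y A c h d F k w) ->
  P_shape D Pf /\ Y_shape D Yf.
Proof.
  intros hkF hkA HD HPf HYf.
  assert (0 < d * h) by nra.
  split.
  - apply (P_shape_quad_ratio ((1 - c) * (F - k)) (d * A - (1 - c) * F) 0 (1 - c) (d * h));
      [lra | nra | exact HD | exact HPf | |].
    + rewrite Rmult_0_l, Rplus_0_r. apply Rmult_lt_0_compat; nra.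
    + replace ((1 - c) * (F - k) * (d * h) + 0 * (1 - c) + (d * A - (1 - c) * F) * (d * h))
        with ((d * h) * (d * A - (1 - c) * k)) by ring. nra.
  - apply (Y_shape_quad_ratio A (h * (F - k)) (- (h * F)) (1 - c) (d * h));
      [lra | nra | exact HD | exact HYf | nra |].
    + replace (h * (F - k) * (1 - c) + A * (d * h) + - (h * F) * (1 - c))
        with (h * (d * A - (1 - c) * k)) by ring. nra.
Qed.

Lemma Pstar_branch w : Pstar A c h d F w = branch_P A c h d F 0 w.
Proof. unfold Pstar, branch_P, quad_ratio. f_equal; ring. Qed.

Lemma Ystar_branch w : Ystar A c h d F w = branch_Y A c h d F 0 w.
Proof. unfold Ystar, branch_Y, quad_ratio. f_equal; ring. Qed.

Section Solve.
Variables w Y P : R.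
Hypotheses (Hw : 0 <= w <= 1) (HY : (1 - c) * Y = A + w * h * P).

Let x := P - (1 - w) * F - w * d * Y.

Lemma denom_pos : 0 < 1 - c - d * h * w ^ 2.
Proof. apply quad_ratio_denom_pos; [lra | nra | exact Hw]. Qed.

Lemma steady_P_branch : P = branch_P A c h d F (- x) w.
Proof.
  pose proof denom_pos.
  assert (EP : (1 - c - d * h * w ^ 2) * P = (1 - c) * (F - - x) + (d * A - (1 - c) * F) * w).
  { apply Rminus_diag_uniq. unfold x.
    replace ((1 - c - d * h * w ^ 2) * P - ((1 - c) * (F - - (P - (1 - w) * F - w * d * Y))
      + (d * A - (1 - c) * F) * w)) with (w * d * ((1 - c) * Y - (A + w * h * P))) by ring.
    rewrite HY. ring. }
  unfold branch_P, quad_ratio.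
  replace ((1 - c) * (F - - x) + (d * A - (1 - c) * F) * w + 0 * w ^ 2)
    with ((1 - c - d * h * w ^ 2) * P) by (rewrite EP; ring).
  field. lra.
Qed.

Lemma steady_Y_branch : Y = branch_Y A c h d F (- x) w.
Proof.
  pose proof denom_pos.
  apply (Rmult_eq_reg_l (1 - c)); [| lra].
  rewrite HY, steady_P_branch at 1. unfold branch_P, branch_Y, quad_ratio. field. lra.
Qed.

Lemma offset_Pstar : (1 - c) * x = (1 - c - w ^ 2 * d * h) * (P - Pstar A c h d F w).
Proof.
  assert (0 < 1 - c - w ^ 2 * d * h) by (pose proof denom_pos; nra).
  unfold x, Pstar.
  replace ((1 - c) * (P - (1 - w) * F - w * d * Y))
    with ((1 - c) * P - (1 - c) * (1 - w) * F - w * d * ((1 - c) * Y)) by ring.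
  rewrite HY. field. lra.
Qed.
End Solve.

(* On a branch of steady states lying on one side of [P*], the offsets are fixed
   points of the same sign, hence all equal. *)
Lemma steady_branch gI gP gamma sigma mu b beta (Yf Pf : R -> R) (s : R) :
  admissible_g gI -> admissible_g gP -> 0 < sigma -> 0 < mu -> 0 < b -> 0 < beta ->
  (forall w, open01 w ->
     steady_state gI gP A c gamma w h d sigma mu F b beta (Yf w, Pf w, Yf w) /\
     0 < s * (Pf w - Pstar A c h d F w)) ->
  exists k, - b < k < b /\ forall w, open01 w ->
    Pf w = branch_P A c h d F k w /\ Yf w = branch_Y A c h d F k w.
Proof.
  intros HI HP hsigma hmu hb hbeta Hbranch.
  set (x := fun w => Pf w - (1 - w) * F - w * d * Yf w).
  assert (Hx : forall w, open01 w ->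
    (1 - c) * Yf w = A + w * h * Pf w /\
    scaled_logistic b (4 * b * beta) (x w) = x w /\ 0 < s * x w).
  { intros w Hw. destruct (Hbranch w Hw) as [Hss Hs].
    destruct (steady_state_equations gI gP A c gamma w h d sigma mu F b beta (Yf w) (Pf w)
      HI HP hsigma hmu Hss) as [EY Ex].
    assert (Hw' : 0 <= w <= 1) by (destruct Hw; lra).
    pose proof (offset_Pstar w (Yf w) (Pf w) Hw' EY) as Eoff.
    pose proof (denom_pos w Hw').
    split; [exact EY | split; [exact Ex |]].
    assert (0 < s * ((1 - c) * x w)) by (unfold x; rewrite Eoff; nra).
    nra. }
  assert (Hhalf : open01 (1 / 2)) by (unfold open01; lra).
  destruct (Hx _ Hhalf) as [_ [Ehalf Shalf]].
  exists (- x (1 / 2)). split.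
  { rewrite <- Ehalf. pose proof (scaled_logistic_bound b (4 * b * beta) (x (1 / 2)) hb). lra. }
  intros w Hw. destruct (Hx w Hw) as [EY [Ew Sw]].
  assert (Hxw : x w = x (1 / 2)).
  { apply (scaled_logistic_fixed_same_sign b (4 * b * beta));
      [nra | nra | exact Ew | exact Ehalf]. }
  assert (Hw' : 0 <= w <= 1) by (destruct Hw; lra).
  rewrite <- Hxw. split; [apply steady_P_branch | apply steady_Y_branch]; assumption.
Qed.

Lemma steady_branch_shapes gI gP gamma sigma mu b beta (Yf Pf : R -> R) (s : R) :
  admissible_g gI -> admissible_g gP -> 0 < sigma -> 0 < mu -> 0 < b -> 0 < beta ->
  b < F -> (1 - c) * b < d * A ->
  (forall w, open01 w ->
     steady_state gI gP A c gamma w h d sigma mu F b beta (Yf w, Pf w, Yf w) /\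
     0 < s * (Pf w - Pstar A c h d F w)) ->
  P_shape open01 Pf /\ Y_shape open01 Yf.
Proof.
  intros HI HP hsigma hmu hb hbeta hbF hbA Hbranch.
  destruct (steady_branch gI gP gamma sigma mu b beta Yf Pf s HI HP hsigma hmu hb hbeta Hbranch)
    as [k [Hk Hkf]].
  apply (branch_shapes k); [lra | nra | | |].
  - intros w [Hw0 Hw1]. lra.
  - intros w Hw. apply Hkf, Hw.
  - intros w Hw. apply Hkf, Hw.
Qed.
End Branches.

Theorem proposition3
  (A c gamma h d sigma mu Fstar b beta : R)
  (hA : 0 < A) (hc : 0 < c < 1) (hgamma : 0 < gamma) (hh : 0 < h) (hd : 0 < d)
  (hsigma : 0 < sigma) (hmu : 0 < mu) (hF : 0 < Fstar) (hb : 0 < b)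
  (hbeta : 0 < beta)
  (A1 : 1 - c - h * d > 0) :
  (* (i) *)
  (P_shape closed01 (Pstar A c h d Fstar) /\
   Y_shape closed01 (Ystar A c h d Fstar)) /\
  (* (ii) *)
  (forall (gI gP : R -> R), admissible_g gI -> admissible_g gP ->
   1 / sqrt (2 * beta) < b -> b < Rmin (d * A / (1 - c)) Fstar ->
   forall YL PL YH PH : R -> R,
   (forall w, open01 w ->
      steady_state gI gP A c gamma w h d sigma mu Fstar b beta (YL w, PL w, YL w) /\
      PL w < Pstar A c h d Fstar w) ->
   (forall w, open01 w ->
      steady_state gI gP A c gamma w h d sigma mu Fstar b beta (YH w, PH w, YH w) /\
      Pstar A c h d Fstar w < PH w) ->
   (forall w, open01 w ->
      PL w <> Pstar A c h d Fstar w
               - (1 - c) / (1 - c - w ^ 2 * d * h) * sqrt (b ^ 2 - 1 / (2 * beta))) ->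
   (P_shape open01 PL /\ Y_shape open01 YL) /\
   (P_shape open01 PH /\ Y_shape open01 YH)).
Proof.
  split.
  { apply (branch_shapes A c h d Fstar hc hh hd A1 0); [lra | nra | | |].
    - intros w Hw. exact Hw.
    - intros w _. apply Pstar_branch.
    - intros w _. apply Ystar_branch. }
  (* The lower bound on [b] (existence of three steady states) and the excluded value
     of [PL] are not needed: the shapes hold on any branch of steady states off [P*]. *)
  intros gI gP HI HP _ Hbmin YL PL YH PH HL HH _.
  assert (HbF : b < Fstar) by (pose proof (Rmin_r (d * A / (1 - c)) Fstar); lra).
  assert (HbA : (1 - c) * b < d * A).
  { pose proof (Rmin_l (d * A / (1 - c)) Fstar).
    apply (Rmult_lt_reg_r (/ (1 - c))); [apply Rinv_0_lt_compat; lra |].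
    replace ((1 - c) * b * / (1 - c)) with b by (field; lra). lra. }
  split.
  - apply (steady_branch_shapes A c h d Fstar hc hh hd A1 gI gP gamma sigma mu b beta YL PL (-1));
      auto.
    intros w Hw. destruct (HL w Hw). split; [assumption | lra].
  - apply (steady_branch_shapes A c h d Fstar hc hh hd A1 gI gP gamma sigma mu b beta YH PH 1);
      auto.
    intros w Hw. destruct (HH w Hw). split; [assumption | lra].
Qed.
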